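(* Let $n\geq 2$. Let $\mu$ denote Shannon entropy on classical states, $\mu(x)=-\sum_{i}x_i\log x_i$, and let $\sigma$ denote von Neumann entropy on quantum states, $\sigma(\rho)=-\mathrm{tr}(\rho\log\rho)$. Then: (i) There is an order embedding $\phi:(\Delta^n,\sqsubseteq)\rightarrow(\Omega^n,\sqsubseteq)$ with $\sigma\circ\phi=\mu$. (ii) For any $m\geq 2$, there is no order embedding $\phi:(\Omega^n,\sqsubseteq)\rightarrow(\Delta^m,\sqsubseteq)$ with $\mu\circ\phi=\sigma$ (here $\mu$ is Shannon entropy on $\Delta^m$).
   Context: Classical states: for $k\geq 2$, $\Delta^k=\{x\in[0,1]^k:\sum_{i=1}^k x_i=1\}$; $e_i$ denotes the pure state with $x_i=1$. The Bayesian order $\sqsubseteq$ on $\Delta^k$ is defined recursively. For $x,y\in\Delta^2$: $x\sqsubseteq y$ iff $(y_1\leq x_1\leq 1/2)$ or $(1/2\leq x_1\leq y_1)$. For $k\geq 2$ and $x,y\in\Delta^{k+1}$: $x\sqsubseteq y$ iff for every $i\in\{1,\ldots,k+1\}$ with $x,y\in\mathrm{dom}(p_i)$ one has $p_i(x)\sqsubseteq p_i(y)$ in $\Delta^k$, where the Bayesian projection $p_i:\Delta^{k+1}\rightharpoonup\Delta^k$ has domain $\Delta^{k+1}\setminus\{e_i\}$ and is given by $p_i(x)=\frac{1}{1-x_i}(x_1,\ldots,x_{i-1},x_{i+1},\ldots,x_{k+1})$. Quantum states: $\Omega^n$ is the set of density operators on an $n$-dimensional complex Hilbert space $\mathcal{H}^n$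 (self-adjoint, positive linear operators of trace $1$). An observable is a self-adjoint operator $e$ on $\mathcal{H}^n$; throughout, observables are assumed to have $\mathrm{spec}(e)=\{1,\ldots,n\}$. For such $e$ and $\rho\in\Omega^n$, $\mathrm{spec}(\rho|e):=(\mathrm{tr}(p_e^1\rho),\ldots,\mathrm{tr}(p_e^n\rho))\in\Delta^n$, where $p_e^\lambda$ is the orthogonal projection onto the eigenspace of $e$ for eigenvalue $\lambda$. The spectral order on $\Omega^n$: $\rho\sqsubseteq\tau$ iff there is an observable $e$ with $[\rho,e]=[\tau,e]=0$ (where $[a,b]=ab-ba$) and $\mathrm{spec}(\rho|e)\sqsubseteq\mathrm{spec}(\tau|e)$ in the Bayesian order on $\Delta^n$. An order embedding $\phi:P\to Q$ between posets is a map with $x\sqsubseteq y\iff \phi(x)\sqsubseteq\phi(y)$ for all $x,y\in P$. Convention $0\log 0=0$. *)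

From HB Require Import structures.
From mathcomp Require Import all_boot all_order all_algebra.
From mathcomp Require Import reals exp complex.
Set Implicit Arguments. Unset Strict Implicit. Unset Printing Implicit Defensive.
Import Order.TTheory GRing.Theory Num.Theory.
Local Open Scope ring_scope.

Section Defs.
Variable R : realType.
Local Notation C := (complex R).

Definition in_Delta (k : nat) (x : 'I_k -> R) : Prop :=
  (forall i, 0 <= x i <= 1) /\ \sum_(i < k) x i = 1.

Definition pure (k : nat) (i : 'I_k) : 'I_k -> R :=
  fun j => if j == i then 1 else 0.

Definition bproj (k : nat) (i : 'I_k.+1) (x : 'I_k.+1 -> R) : 'I_k -> R :=
  fun j => x (lift i j) / (1 - x i).

Fixpoint bayes (m : nat) : ('I_m.+2 -> R) -> ('I_m.+2 -> R) -> Prop :=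
  match m with
  | 0 => fun x y =>
      (y ord0 <= x ord0 /\ x ord0 <= 1 / 2) \/ (1 / 2 <= x ord0 /\ x ord0 <= y ord0)
  | m'.+1 => fun x y =>
      forall i : 'I_m'.+3, x <> pure i -> y <> pure i ->
        @bayes m' (bproj i x) (bproj i y)
  end.

Definition bayes_le (n : nat) : ('I_n -> R) -> ('I_n -> R) -> Prop :=
  match n return ('I_n -> R) -> ('I_n -> R) -> Prop with
  | m.+2 => @bayes m
  | _ => fun _ _ => False
  end.

(* Shannon entropy, with 0 log 0 = 0 *)
Definition xlogx (t : R) : R := if t == 0 then 0 else t * ln t.
Definition shannon (k : nat) (x : 'I_k -> R) : R := - \sum_(i < k) xlogx (x i).

Definition ctr (p q : nat) (A : 'M[C]_(p, q)) : 'M[C]_(q, p) :=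
  (map_mx (fun z : C => z^*) A)^T.

Definition self_adjoint (n : nat) (A : 'M[C]_n) : Prop := ctr A = A.

Definition density (n : nat) (rho : 'M[C]_n) : Prop :=
  [/\ self_adjoint rho,
      (forall v : 'cV[C]_n, 0 <= (ctr v *m rho *m v) 0 0)
    & \tr rho = 1].

Definition observable (n : nat) (e : 'M[C]_n) : Prop :=
  self_adjoint e /\
  (forall a : C, eigenvalue e a <-> exists k : 'I_n, a = (k.+1)%:R).

Definition eig_proj (n : nat) (e : 'M[C]_n) (a : C) (P : 'M[C]_n) : Prop :=
  [/\ P *m P = P, self_adjoint P &
      forall v : 'cV[C]_n, e *m v = a *: v <-> P *m v = v].

(* x = spec(rho | e) : x_k = tr(p_e^{k+1} rho) *)
Definition spec_rel (n : nat) (rho e : 'M[C]_n) (x : 'I_n -> R) : Prop :=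
  forall k : 'I_n, exists P, eig_proj e (k.+1)%:R P /\
    Complex (x k) 0 = \tr (P *m rho).

Definition spectral_le (n : nat) (rho tau : 'M[C]_n) : Prop :=
  exists e : 'M[C]_n, observable e /\ rho *m e = e *m rho /\ tau *m e = e *m tau /\
    exists x y : 'I_n -> R,
      spec_rel rho e x /\ spec_rel tau e y /\ bayes_le x y.

Definition unitary (n : nat) (U : 'M[C]_n) : Prop := ctr U *m U = 1%:M.

Definition cdiag (n : nat) (d : 'I_n -> R) : 'M[C]_n :=
  diag_mx (\row_i Complex (d i) 0).

(* von Neumann entropy: s = -tr(rho log rho), where rho log rho is defined by
   functional calculus from a spectral decomposition rho = U diag(d) U^*. *)
Definition vN_entropy (n : nat) (rho : 'M[C]_n) (s : R) : Prop :=
  exists (U : 'M[C]_n) (d : 'I_n -> R),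
    unitary U /\ rho = U *m cdiag d *m ctr U /\
    Complex s 0 = - \tr (U *m cdiag (fun i => xlogx (d i)) *m ctr U).

End Defs.

(* (i) The embedding is x |-> diag(x).  Diagonal matrices commute with the
   observable diag(1, ..., n), whose eigenprojections read off x, so the
   Bayesian order is reproduced.  Conversely, an observable e commuting with
   diag(x) and diag(y) satisfies e U = U diag(1, ..., n) for a unitary U of
   eigenvectors; a nonvanishing term s of the Leibniz expansion of det U then
   gives spec(diag x | e) o s = x, and the Bayesian order is invariant under
   permutations of the coordinates.
   (ii) Pure states have entropy 0, so an entropy-preserving phi maps them to
   pure classical states, of which there are only m.  Two pure states that are
   comparable in the spectral order coincide: an observable commuting with
   both is diagonal with them in a common basis, their spectra are e_k and
   e_l, and e_k below e_l forces k = l.  As there are infinitely many pure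
   states, two distinct ones have the same image, hence are comparable by
   reflexivity, a contradiction. *)

From mathcomp Require Import all_boot all_order all_algebra all_fingroup.
From mathcomp Require Import reals exp complex boolp.
From mathcomp Require Import lra.

Set Implicit Arguments.
Unset Strict Implicit.
Unset Printing Implicit Defensive.
Import Order.TTheory GRing.Theory Num.Theory.
Local Open Scope ring_scope.

Section ClassicalStates.
Variable R : realType.

Lemma pure_inj k : injective (pure R (k:=k)).
Proof.
move=> a b /(congr1 (fun f => f a)); rewrite /pure eqxx.
by case: eqP => // _ /eqP; rewrite oner_eq0.
Qed.

Lemma bproj_pure m (i : 'I_m.+1) (k : 'I_m) : bproj i (pure R (lift i k)) = pure R k.
Proof.
apply: funext => j; rewrite /bproj /pure (inj_eq lift_inj).
by rewrite (negbTE (neq_lift i k)) subr0 divr1.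
Qed.

Lemma bayes_refl m (x : 'I_m.+2 -> R) : bayes x x.
Proof.
elim: m x => [|m IH] x /=; last by move=> i _ _; apply: IH.
by case: (lerP (x ord0) (1/2)) => h; [left | right]; rewrite lexx ?ltW.
Qed.

Lemma bayes_pure m (k l : 'I_m.+2) : bayes (pure R k) (pure R l) -> k = l.
Proof.
elim: m k l => [|m IH] k l /=.
  rewrite /pure; case: k l => [[|[|k]] hk] // [[|[|l]] hl] //=;
    by [move=> _; apply: val_inj | case=> -[] ? ?; exfalso; lra].
move=> kl_le; apply/eqP; apply: contraT => kl.
have [c] : exists c, c \in [predC pred2 k l].
  apply/card_gt0P; have := cardC (pred2 k l).
  by rewrite card_ord card2 kl /= => /eqP; rewrite !addSn add0n !eqSS => /eqP ->.
rewrite !inE negb_or => /andP[ck cl].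
case: (unlift_some ck) => k' kE _; case: (unlift_some cl) => l' lE _; subst k l.
have not_pure_c j : pure R (lift c j) <> pure R c.
  by move/pure_inj/eqP; rewrite eq_sym (negbTE (neq_lift c j)).
move: kl_le kl => /(_ c (not_pure_c k') (not_pure_c l')).
by rewrite !bproj_pure => /IH ->; rewrite eqxx.
Qed.

Lemma in_Delta_perm k (s : {perm 'I_k}) (x : 'I_k -> R) :
  in_Delta x -> in_Delta (x \o s).
Proof.
move=> [x01 x1]; split=> [i|]; first exact: x01.
by rewrite -x1 [RHS](reindex_inj (@perm_inj _ s)).
Qed.

Lemma in_Delta_bproj m (j : 'I_m.+1) (x : 'I_m.+1 -> R) :
  in_Delta x -> x <> pure R j -> x j < 1 /\ in_Delta (bproj j x).
Proof.
move=> [x01 x1] xj.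
have x_ge0 l : 0 <= x l by case/andP: (x01 l).
have rest : \sum_(l < m) x (lift j l) = 1 - x j.
  by move: x1; rewrite (bigD1_ord j) //=; lra.
have xj_lt1 : x j < 1.
  rewrite lt_neqAle; case/andP: (x01 j) => _ ->; rewrite andbT.
  apply: contra_not_neq xj => xj1; apply: funext => i; rewrite /pure.
  case: eqVneq => [-> // | ij]; rewrite eq_sym in ij; have [l -> _] := unlift_some ij.
  have rest0 : \sum_(l < m) x (lift j l) = 0 by rewrite rest xj1 subrr.
  by rewrite (psumr_eq0P (fun l _ => x_ge0 _) rest0).
split=> //; split; last by rewrite /bproj -mulr_suml rest divff // subr_eq0 gt_eqF.
move=> l; rewrite /bproj divr_ge0 ?x_ge0 ?subr_ge0 ?(ltW xj_lt1) //=.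
rewrite ler_pdivrMr ?subr_gt0 // mul1r -rest.
by rewrite (bigD1 l) //= lerDl sumr_ge0.
Qed.

Lemma bayes_perm m (s : {perm 'I_m.+2}) (x y : 'I_m.+2 -> R) :
  in_Delta x -> in_Delta y -> bayes x y -> bayes (x \o s) (y \o s).
Proof.
elim: m s x y => [|m IH] s x y Dx Dy /=.
  have last_coord (z : 'I_2 -> R) : in_Delta z -> z ord_max = 1 - z ord0.
    have -> : ord_max = lift ord0 ord0 :> 'I_2 by apply: val_inj.
    by case=> _; rewrite !big_ord_recl big_ord0 addr0; lra.
  have : (s ord0 == ord0) || (s ord0 == ord_max) by case: (s ord0) => [[|[|]]].
  by case/orP => /eqP -> //=; rewrite (last_coord x) // (last_coord y) //; lra.
move=> xy i xi yi.
have pure_comp : pure R (s i) \o s = pure R i.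
  by apply: funext => l; rewrite /pure /= (inj_eq perm_inj).
have xsi : x <> pure R (s i) by move=> xe; apply: xi; rewrite xe pure_comp.
have ysi : y <> pure R (s i) by move=> ye; apply: yi; rewrite ye pure_comp.
pose t (l : 'I_m.+2) : 'I_m.+2 := odflt l (unlift (s i) (s (lift i l))).
have liftt l : lift (s i) (t l) = s (lift i l).
  rewrite /t; case: unliftP => [//| /perm_inj /eqP].
  by rewrite eq_sym (negbTE (neq_lift i l)).
have t_inj : injective t.
  by move=> l1 l2 /(congr1 (lift (s i))); rewrite !liftt => /perm_inj /lift_inj.
have bproj_comp (z : 'I_m.+3 -> R) : bproj i (z \o s) = bproj (s i) z \o perm t_inj.
  by apply: funext => l; rewrite /bproj /= permE liftt.
have [_ Dpx] := in_Delta_bproj Dx xsi; have [_ Dpy] := in_Delta_bproj Dy ysi.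
by rewrite !bproj_comp; exact: IH _ _ _ Dpx Dpy (xy _ xsi ysi).
Qed.

Lemma xlogx_le0 (t : R) : 0 <= t <= 1 -> xlogx t <= 0.
Proof.
by case/andP=> t0 t1; rewrite /xlogx; case: eqP => // _; rewrite mulr_ge0_le0 ?ln_le0.
Qed.

Lemma xlogx_eq0 (t : R) : 0 <= t -> xlogx t = 0 -> t = 0 \/ t = 1.
Proof.
move=> t_ge0; rewrite /xlogx; case: eqVneq => [-> _ | t_neq0 /eqP]; first by left.
have t_gt0 : 0 < t by rewrite lt_def t_neq0 t_ge0.
by rewrite mulf_eq0 (negbTE t_neq0) ln_eq0 // => /eqP; right.
Qed.

Lemma shannon_eq0_pure k (x : 'I_k -> R) :
  in_Delta x -> shannon x = 0 -> exists i, x = pure R i.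
Proof.
move=> [x01 x1] shannon0.
have x_ge0 l : 0 <= x l by case/andP: (x01 l).
have sum0 : \sum_l - xlogx (x l) = 0 by rewrite sumrN.
have xlogx0 l : xlogx (x l) = 0.
  have nonneg j : 0 <= - xlogx (x j) by rewrite oppr_ge0 xlogx_le0.
  by apply/oppr_inj; rewrite oppr0 (psumr_eq0P (fun j _ => nonneg j) sum0).
have [i xi] : exists i, x i != 0.
  apply/existsP; apply: contra_eqT x1 => /existsPn x0.
  by rewrite big1 => [|j _]; [rewrite eq_sym oner_eq0 | exact/eqP/negPn/x0].
have xi1 : x i = 1 by case: (xlogx_eq0 (x_ge0 i) (xlogx0 i)) xi => ->; rewrite ?eqxx.
exists i; apply: funext => j; rewrite /pure; case: eqVneq => [-> // | ji].
have rest : \sum_(l | l != i) x l = 0 by move: x1; rewrite (bigD1 i) //= xi1; lra.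
by rewrite (psumr_eq0P (fun l _ => x_ge0 l) rest).
Qed.

Lemma bayes_le_pure n (k l : 'I_n) :
  bayes_le (pure R k) (pure R l) -> k = l.
Proof. by case: n k l => [|[|n]] k l; [case | case | exact: bayes_pure]. Qed.

End ClassicalStates.

Lemma mxtrace_delta_mul (T : pzSemiRingType) n (k : 'I_n) (N : 'M[T]_n) :
  \tr (delta_mx k k *m N) = N k k.
Proof.
rewrite /mxtrace (bigD1 k) //= big1 => [|i ik]; last first.
  by rewrite mxE big1 // => l _; rewrite mxE (negbTE ik) mul0r.
rewrite mxE (bigD1 k) //= big1 => [|l lk]; first by rewrite mxE !eqxx mul1r !addr0.
by rewrite mxE (negbTE lk) andbF mul0r.
Qed.

Lemma det_neq0_perm_support (T : idomainType) n (U : 'M[T]_n) :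
  \det U != 0 -> exists s : 'S_n, forall i, U i (s i) != 0.
Proof.
move=> detU; suff /existsP[s /forallP] : [exists s : 'S_n, [forall i, U i (s i) != 0]].
  by exists s.
apply: contra_neqT detU => /existsPn no_s; rewrite /determinant big1 // => s _.
have /forallPn[i /negPn /eqP Ui0] := no_s s.
by rewrite (bigD1 i) //= Ui0 mul0r mulr0.
Qed.

Section Adjoint.
Variable R : realType.
Local Notation C := (complex R).

Lemma ctrE p q (A : 'M[C]_(p, q)) i j : ctr A i j = (A j i)^*.
Proof. by rewrite !mxE. Qed.

Lemma ctrK p q (A : 'M[C]_(p, q)) : ctr (ctr A) = A.
Proof. by apply/matrixP => i j; rewrite !ctrE conjCK. Qed.

Lemma ctrM p q r (A : 'M[C]_(p, q)) (B : 'M[C]_(q, r)) :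
  ctr (A *m B) = ctr B *m ctr A.
Proof.
apply/matrixP => i j; rewrite ctrE !mxE rmorph_sum; apply: eq_bigr => k _.
by rewrite rmorphM !ctrE mulrC.
Qed.

Lemma ctrZ p q a (A : 'M[C]_(p, q)) : ctr (a *: A) = a^* *: ctr A.
Proof. by apply/matrixP => i j; rewrite !(ctrE, mxE) rmorphM. Qed.

Lemma ctr1 n : ctr (1%:M : 'M[C]_n) = 1%:M.
Proof. by apply/matrixP => i j; rewrite !(ctrE, mxE) conjC_nat eq_sym. Qed.

Lemma ctr_diag_mx n (d : 'rV[C]_n) :
  (forall i, (d 0 i)^* = d 0 i) -> ctr (diag_mx d) = diag_mx d.
Proof.
move=> d_real; apply/matrixP => i j; rewrite ctrE !mxE eq_sym.
by case: eqP => [-> | _]; rewrite ?mulr1n ?d_real // !mulr0n conjC0.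
Qed.

Lemma conj_Complex_real (a : R) : (Complex a 0)^* = Complex a 0.
Proof. by apply/eqP; rewrite -CrealE complex_real. Qed.

Lemma sum_Complex_real n (f : 'I_n -> R) :
  \sum_i Complex (f i) 0 = Complex (\sum_i f i) 0.
Proof.
by elim/big_rec2: _ => // i a b _ ->; apply/eqP; rewrite eq_complex /= addr0 !eqxx.
Qed.

Lemma row_cnorm_gt0 n (r : 'rV[C]_n) : r != 0 -> 0 < (r *m ctr r) 0 0.
Proof.
have cnorm_ge0 i : 0 <= r 0 i * ctr r i 0 by rewrite ctrE mul_conjC_ge0.
move=> r_neq0; rewrite mxE lt0r sumr_ge0 ?andbT //; apply: contra r_neq0 => /eqP r0.
apply/eqP/rowP => i; rewrite mxE; apply/eqP.
by rewrite -mul_conjC_eq0 -ctrE (psumr_eq0P (fun i _ => cnorm_ge0 i) r0).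
Qed.

Lemma cdiag_self_adjoint n (x : 'I_n -> R) : self_adjoint (cdiag x).
Proof. by apply: ctr_diag_mx => i; rewrite mxE conj_Complex_real. Qed.

Lemma mxtrace_cdiag n (x : 'I_n -> R) : \tr (cdiag x) = Complex (\sum_i x i) 0.
Proof.
by rewrite mxtrace_diag -sum_Complex_real; apply: eq_bigr => i _; rewrite mxE.
Qed.

End Adjoint.

Section StdObservable.
Variables (R : realType) (n : nat).
Local Notation C := (complex R).

Definition std_obs : 'M[C]_n := diag_mx (\row_(k < n) k.+1%:R).

Lemma eq_natrS (i j : 'I_n) : ((i.+1)%:R == (j.+1)%:R :> C) = (i == j).
Proof. by rewrite eqr_nat eqSS. Qed.

Lemma std_obs_eigenvector (z : 'cV[C]_n) (k : 'I_n) :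
  std_obs *m z = k.+1%:R *: z -> forall i, i != k -> z i 0 = 0.
Proof.
move=> /matrixP ez i ik; have /eqP := ez i 0; rewrite mul_diag_mx !mxE.
by rewrite -subr_eq0 -mulrBl mulf_eq0 subr_eq0 eq_natrS (negbTE ik) => /eqP.
Qed.

Lemma std_obs_observable : observable std_obs.
Proof.
split=> [|a]; first by apply: ctr_diag_mx => i; rewrite mxE conjC_nat.
split=> [/eigenvalueP[r er r_neq0] | [k ->]].
  have [j rj] : exists j, r 0 j != 0.
    apply/existsP; apply: contra_neqT r_neq0 => /existsPn r0.
    by apply/rowP => j; rewrite mxE; apply/eqP/negPn/r0.
  exists j; have /eqP := congr1 (fun M : 'rV_n => M 0 j) er.
  rewrite mul_mx_diag !mxE mulrC -subr_eq0 -mulrBl mulf_eq0 (negbTE rj) orbF.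
  by rewrite subr_eq0 => /eqP.
apply/eigenvalueP; exists (delta_mx 0 k); last first.
  by apply/eqP => /matrixP /(_ 0 k); rewrite !mxE !eqxx => /eqP; rewrite oner_eq0.
apply/matrixP => i j; rewrite ord1 mul_mx_diag !mxE eqxx /=.
by case: (eqVneq j k) => [-> | _]; rewrite ?mulr0 ?mul0r // mulrC.
Qed.

Lemma std_obs_eig_proj (k : 'I_n) : eig_proj std_obs k.+1%:R (delta_mx k k).
Proof.
have delta_col (v : 'cV[C]_n) i : (delta_mx k k *m v) i 0 = (i == k)%:R * v k 0.
  rewrite mxE (bigD1 k) //= big1 ?addr0 => [|l lk]; first by rewrite mxE eqxx andbT.
  by rewrite mxE (negbTE lk) andbF mul0r.
split; first exact: mul_delta_mx.
  by apply/matrixP => i j; rewrite ctrE !mxE conjC_nat andbC.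
move=> v; split=> [/std_obs_eigenvector v0 | /matrixP dv].
  apply/matrixP => i j; rewrite ord1 delta_col.
  by case: (eqVneq i k) => [-> | ik]; rewrite ?eqxx ?mul1r // mul0r v0.
apply/matrixP => i j; rewrite ord1 mul_diag_mx !mxE.
case: (eqVneq i k) => [-> // | ik].
by have := dv i 0; rewrite delta_col (negbTE ik) mul0r => <-; rewrite !mulr0.
Qed.

Lemma spec_rel_cdiag (x : 'I_n -> R) : spec_rel (cdiag x) std_obs x.
Proof.
move=> k; exists (delta_mx k k); split; first exact: std_obs_eig_proj.
by rewrite mxtrace_delta_mul !mxE eqxx mulr1n.
Qed.

End StdObservable.

Section Diagonalization.
Variables (R : realType) (n : nat).
Local Notation C := (complex R).

Lemma self_adjoint_eigenvector_orth (e : 'M[C]_n) (u w : 'cV[C]_n) a b :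
  self_adjoint e -> e *m u = a *: u -> e *m w = b *: w -> a^* != b ->
  ctr u *m w = 0.
Proof.
move=> e_sa eu ew ab; have := esym (mulmxA (ctr u) e w).
rewrite -{1}e_sa -ctrM eu ew ctrZ -scalemxAl -scalemxAr => /eqP.
by rewrite -subr_eq0 -scalerBl scaler_eq0 subr_eq0 (negbTE ab) => /eqP.
Qed.

Lemma observable_unit_eigenvector (e : 'M[C]_n) (k : 'I_n) :
  observable e -> exists u : 'cV_n, e *m u = k.+1%:R *: u /\ ctr u *m u = 1%:M.
Proof.
case=> e_sa e_spec.
have /eigenvalueP[r er r_neq0] : eigenvalue e k.+1%:R by apply/e_spec; exists k.
have e_ctr_r : e *m ctr r = k.+1%:R *: ctr r.
  by rewrite -{1}e_sa -ctrM er ctrZ conjC_nat.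
have z_gt0 := row_cnorm_gt0 r_neq0; set z := (r *m ctr r) 0 0 in z_gt0.
pose c := (sqrtC z)^-1.
have c_real : c^* = c by rewrite geC0_conj // invr_ge0 sqrtC_ge0 ltW.
exists (c *: ctr r); split; first by rewrite -scalemxAr e_ctr_r !scalerA mulrC.
rewrite ctrZ ctrK c_real -scalemxAl -scalemxAr scalerA.
apply/matrixP => i j; rewrite !ord1 [LHS]mxE [RHS]mxE -/z eqxx mulr1n.
by rewrite /c -expr2 exprVn sqrtCK mulVf // gt_eqF.
Qed.

Lemma observable_diagonalization (e : 'M[C]_n) : observable e ->
  exists U : 'M[C]_n,
    [/\ ctr U *m U = 1%:M, U *m ctr U = 1%:M & e *m U = U *m std_obs R n].
Proof.
move=> e_obs.
have [u u_eig] := fin_all_exists (fun k => observable_unit_eigenvector k e_obs).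
pose U := \matrix_(i, k) u k i 0.
have ctrUU : ctr U *m U = 1%:M.
  apply/matrixP => j k; have -> : (ctr U *m U) j k = (ctr (u j) *m u k) 0 0.
    by rewrite !mxE; apply: eq_bigr => i _; rewrite !ctrE !mxE.
  case: (eqVneq j k) => [-> | jk]; first by rewrite (u_eig k).2 !mxE !eqxx.
  rewrite (self_adjoint_eigenvector_orth e_obs.1 (u_eig j).1 (u_eig k).1).
    by rewrite !mxE (negbTE jk).
  by rewrite conjC_nat eq_natrS.
exists U; split=> //; first exact: mulmx1C.
apply/matrixP => i k; rewrite mul_mx_diag !mxE.
have := congr1 (fun M : 'cV_n => M i 0) (u_eig k).1; rewrite !mxE mulrC => <-.
by apply: eq_bigr => l _; rewrite mxE.
Qed.

End Diagonalization.

Section PureStates.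
Variables (R : realType) (n : nat).
Local Notation C := (complex R).

Definition pure_state (rho : 'M[C]_n) :=
  \tr rho = 1 /\ exists (c : C) (v : 'cV_n), rho = c *: (v *m ctr v).

Lemma pure_state_conj (U rho : 'M[C]_n) :
  U *m ctr U = 1%:M -> pure_state rho -> pure_state (ctr U *m rho *m U).
Proof.
move=> UctrU [tr1 [c [v rhoE]]]; split.
  by rewrite mxtrace_mulC mulmxA UctrU mul1mx.
by exists c, (ctr U *m v); rewrite rhoE ctrM ctrK -scalemxAr -scalemxAl !mulmxA.
Qed.

Lemma pure_state_diag (M : 'M[C]_n) :
  pure_state M -> (forall i j, i != j -> M i j = 0) -> exists k, M = delta_mx k k.
Proof.
move=> [tr1 [c [w Mcw]]] M_diag.
have ME i j : M i j = c * (w i 0 * (w j 0)^*) by rewrite Mcw !mxE big_ord1 ctrE.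
have [k Mkk] : exists k, M k k != 0.
  apply/existsP; apply: contra_eqT tr1 => /existsPn M0.
  by rewrite /mxtrace big1 => [|i _]; [rewrite eq_sym oner_eq0 | exact/eqP/negPn/M0].
move: (Mkk); rewrite ME !mulf_eq0 !negb_or => /and3P[c0 wk0 _].
have w0 j : j != k -> w j 0 = 0.
  move=> jk; have /eqP : M k j = 0 by apply: M_diag; rewrite eq_sym.
  by rewrite ME !mulf_eq0 conjC_eq0 (negbTE c0) (negbTE wk0) => /eqP.
have M0 i j : (i != k) || (j != k) -> M i j = 0.
  by case/orP => /w0 wl0; rewrite ME wl0 ?conjC0 ?mul0r ?mulr0.
have Mkk1 : M k k = 1.
  by rewrite -tr1 /mxtrace (bigD1 k) //= big1 ?addr0 // => i ik; rewrite M0 ?ik.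
exists k; apply/matrixP => i j; rewrite mxE.
case: (eqVneq i k) => [-> | ik]; last by rewrite M0 ?ik.
by case: (eqVneq j k) => [-> | jk]; rewrite ?Mkk1 // M0 ?jk ?orbT.
Qed.

Lemma vN_entropy_pure (rho : 'M[C]_n) s : pure_state rho -> vN_entropy rho s -> s = 0.
Proof.
move=> rho_pure [U [d [ctrUU [rhoE sE]]]].
have rhoD : ctr U *m rho *m U = cdiag d.
  by rewrite rhoE !mulmxA ctrUU mul1mx -mulmxA ctrUU mulmx1.
have rho_offdiag i j : i != j -> (ctr U *m rho *m U) i j = 0.
  by move=> ij; rewrite rhoD mxE (negbTE ij) mulr0n.
have [k Dk] := pure_state_diag (pure_state_conj (mulmx1C ctrUU) rho_pure) rho_offdiag.
have xlogx_d i : xlogx (d i) = 0.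
  have /matrixP/(_ i i) := etrans (esym rhoD) Dk; rewrite !mxE !eqxx mulr1n andbb.
  by rewrite /xlogx; case: (i == k) => -[->]; rewrite ?ln1 ?mulr0 ?if_same ?eqxx.
have cdiag0 : cdiag (fun i => xlogx (d i)) = 0.
  by apply/matrixP => i j; rewrite !mxE xlogx_d; case: (i == j).
by move: sE; rewrite cdiag0 mulmx0 mul0mx mxtrace0 oppr0 => -[].
Qed.

Lemma rank_one_density (c : C) (v : 'cV[C]_n) :
  0 <= c -> \tr (c *: (v *m ctr v)) = 1 -> density (c *: (v *m ctr v)).
Proof.
move=> c_ge0 tr1; split=> //; first by rewrite /self_adjoint ctrZ ctrM ctrK geC0_conj.
move=> w; rewrite -scalemxAr -scalemxAl [X in 0 <= X]mxE mulr_ge0 //.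
have -> : ctr w *m (v *m ctr v) *m w = (ctr w *m v) *m ctr (ctr w *m v).
  by rewrite ctrM ctrK !mulmxA.
by rewrite mxE big_ord1 ctrE mul_conjC_ge0.
Qed.

End PureStates.

Section ObservableBasis.
Variables (R : realType) (n : nat) (e U : 'M[complex R]_n).
Hypotheses (ctrUU : ctr U *m U = 1%:M) (UctrU : U *m ctr U = 1%:M)
  (eU : e *m U = U *m std_obs R n).

Lemma commute_obs_offdiag (A : 'M[complex R]_n) :
  A *m e = e *m A -> forall i j, i != j -> (ctr U *m A *m U) i j = 0.
Proof.
move=> Ae i j ij.
have Ue : ctr U *m e = std_obs R n *m ctr U.
  by rewrite -[LHS]mulmx1 -UctrU mulmxA -(mulmxA _ e) eU mulmxA ctrUU mul1mx.
set N := ctr U *m A *m U.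
have /matrixP/(_ i j)/eqP : N *m std_obs R n = std_obs R n *m N.
  by rewrite /N -mulmxA -eU mulmxA -(mulmxA _ A) Ae mulmxA Ue -!mulmxA.
rewrite mul_mx_diag mul_diag_mx !mxE mulrC -subr_eq0 -mulrBl mulf_eq0 subr_eq0.
by rewrite eq_natrS eq_sym (negbTE ij) => /eqP.
Qed.

Lemma eig_proj_obs (k : 'I_n) P :
  eig_proj e k.+1%:R P -> P = U *m delta_mx k k *m ctr U.
Proof.
case=> PP P_sa P_eig; pose Q := ctr U *m P *m U.
suff <- : Q = delta_mx k k by rewrite /Q !mulmxA UctrU mul1mx -mulmxA UctrU mulmx1.
have U_inj (a b : 'cV_n) : U *m a = U *m b -> a = b.
  by move/(congr1 (mulmx (ctr U))); rewrite !mulmxA ctrUU !mul1mx.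
have Q_eig (v : 'cV_n) : Q *m v = v <-> std_obs R n *m v = k.+1%:R *: v.
  have Q_P : Q *m v = v <-> P *m (U *m v) = U *m v.
    split=> [Qv | PUv]; last by rewrite /Q -!mulmxA PUv mulmxA ctrUU mul1mx.
    by rewrite -{2}Qv /Q !mulmxA UctrU mul1mx.
  apply: (iff_trans Q_P); apply: (iff_trans (iff_sym (P_eig _))).
  by rewrite mulmxA eU -mulmxA scalemxAr; split=> [/U_inj | ->].
have QQ : Q *m Q = Q.
  by rewrite /Q !mulmxA -(mulmxA _ U (ctr U)) UctrU mulmx1 -(mulmxA _ P P) PP.
have Q_sa : ctr Q = Q by rewrite /Q !ctrM ctrK P_sa mulmxA.
have Q_row i j : i != k -> Q i j = 0.
  move=> ik; have Qj : std_obs R n *m col j Q = k.+1%:R *: col j Q.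
    by apply/(Q_eig _).1; rewrite colE mulmxA QQ.
  by have := std_obs_eigenvector Qj ik; rewrite mxE.
have Qkk : Q k k = 1.
  have Qk : Q *m delta_mx k 0 = delta_mx k 0 :> 'cV_n.
    apply: (Q_eig _).2; apply/matrixP => i j; rewrite mul_diag_mx !mxE.
    by case: eqP => [-> | _]; rewrite /= ?mulr0n ?mulr0.
  by have /matrixP/(_ k 0) := Qk; rewrite -colE !mxE !eqxx.
apply/matrixP => i j; rewrite [RHS]mxE.
case: (eqVneq i k) => [-> | ik]; last by rewrite Q_row.
case: (eqVneq j k) => [-> | jk]; first by rewrite Qkk.
by rewrite -Q_sa ctrE Q_row // conjC0.
Qed.

Lemma spec_rel_obs (A : 'M[complex R]_n) x :
  spec_rel A e x -> forall k, Complex (x k) 0 = (ctr U *m A *m U) k k.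
Proof.
move=> Ax k; have [P [/eig_proj_obs -> ->]] := Ax k.
by rewrite -!mulmxA mxtrace_mulC -!mulmxA (mulmxA (ctr U)) mxtrace_delta_mul.
Qed.

Lemma cdiag_spec_perm (s : 'S_n) (z z' : 'I_n -> R) :
  (forall i, U i (s i) != 0) -> cdiag z *m e = e *m cdiag z ->
  spec_rel (cdiag z) e z' -> z = z' \o s.
Proof.
move=> Us ze zz'; apply: funext => i /=.
have N_offdiag := commute_obs_offdiag ze; set N := ctr U *m cdiag z *m U in N_offdiag.
have /matrixP/(_ i (s i)) : cdiag z *m U = U *m N by rewrite /N !mulmxA UctrU mul1mx.
rewrite mul_diag_mx [RHS]mxE (bigD1 (s i)) //= big1 => [|l ls]; last first.
  by rewrite N_offdiag ?mulr0.
rewrite -(spec_rel_obs zz' (s i)) !mxE addr0 => /eqP.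
rewrite mulrC -subr_eq0 -mulrBr mulf_eq0 (negbTE (Us i)) subr_eq0.
by move=> /eqP [].
Qed.

Lemma pure_state_commute_obs (rho : 'M[complex R]_n) x :
  pure_state rho -> rho *m e = e *m rho -> spec_rel rho e x ->
  exists k, x = pure R k /\ rho = U *m delta_mx k k *m ctr U.
Proof.
move=> rho_pure rho_e rho_x.
have [k Nk] := pure_state_diag (pure_state_conj UctrU rho_pure)
  (commute_obs_offdiag rho_e).
exists k; split; last by rewrite -Nk !mulmxA UctrU mul1mx -mulmxA UctrU mulmx1.
apply: funext => j; have := spec_rel_obs rho_x j.
by rewrite Nk mxE andbb /pure; case: (j == k) => -[].
Qed.

End ObservableBasis.

Lemma spectral_le_pure_eq (R : realType) n (rho tau : 'M[complex R]_n) :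
  pure_state rho -> pure_state tau -> spectral_le rho tau -> rho = tau.
Proof.
move=> rho_pure tau_pure [e [e_obs [rho_e [tau_e [x [y [rho_x [tau_y xy]]]]]]]].
have [U [ctrUU UctrU eU]] := observable_diagonalization e_obs.
have [k [xk ->]] := pure_state_commute_obs ctrUU UctrU eU rho_pure rho_e rho_x.
have [l [yl ->]] := pure_state_commute_obs ctrUU UctrU eU tau_pure tau_e tau_y.
by move: xy; rewrite xk yl => /bayes_le_pure ->.
Qed.

Section LineStates.
Variables (R : realType) (n : nat).
Local Notation C := (complex R).

Definition line_vec (t : nat) : 'cV[C]_n.+2 :=
  \col_i (if i == 0 :> nat then 1 else if i == 1 :> nat then t%:R else 0).

Definition line_state (t : nat) : 'M[C]_n.+2 :=
  (1 + t ^ 2)%:R^-1 *: (line_vec t *m ctr (line_vec t)).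

Lemma mxtrace_line_state t : \tr (line_state t) = 1.
Proof.
rewrite mxtraceZ mxtrace_mulC /mxtrace big_ord1 mxE !big_ord_recl big1 => [|i _].
  rewrite !ctrE !mxE /= conjC1 conjC_nat mul1r addr0 -natrM -(natrD _ 1) mulnn.
  by rewrite mulVf // pnatr_eq0.
by rewrite ctrE !mxE conjC0 mul0r.
Qed.

Lemma line_state_density t : density (line_state t).
Proof. by apply: rank_one_density; rewrite ?invr_ge0 ?ler0n ?mxtrace_line_state. Qed.

Lemma line_state_pure t : pure_state (line_state t).
Proof. by split; [exact: mxtrace_line_state | do 2 eexists]. Qed.

Lemma line_state_inj : injective line_state.
Proof.
move=> a b /matrixP/(_ 0 0); rewrite !mxE !big_ord1 !ctrE !mxE /= conjC1 !mulr1.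
by move/invr_inj/eqP; rewrite eqr_nat eqn_add2l eqn_sqr => /eqP.
Qed.

End LineStates.

Section DiagonalEmbedding.
Variable R : realType.

Lemma cdiag_density n (x : 'I_n -> R) : in_Delta x -> density (cdiag x).
Proof.
move=> [x01 x1]; split; [exact: cdiag_self_adjoint | | by rewrite mxtrace_cdiag x1].
move=> v; rewrite -mulmxA mxE sumr_ge0 // => i _.
rewrite mul_diag_mx !mxE mulrCA mulr_ge0 //; first by rewrite lecR; case/andP: (x01 i).
by rewrite mulrC mul_conjC_ge0.
Qed.

Lemma vN_entropy_cdiag n (x : 'I_n -> R) : vN_entropy (cdiag x) (shannon x).
Proof.
exists 1%:M, x; rewrite /unitary ctr1 !mulmx1 !mul1mx mxtrace_cdiag.
by do 2 split=> //; apply/eqP; rewrite eq_complex /= oppr0 !eqxx.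
Qed.

Lemma spectral_le_cdiag n (x y : 'I_n.+2 -> R) :
  in_Delta x -> in_Delta y -> bayes_le x y <-> spectral_le (cdiag x) (cdiag y).
Proof.
move=> Dx Dy; split=> [xy | [e [e_obs [xe [ye [x' [y' [xx' [yy' x'y']]]]]]]]].
  exists (std_obs R n.+2); split; first exact: std_obs_observable.
  split; first exact: diag_mxC.
  split; first exact: diag_mxC.
  by exists x, y; do !split=> //; exact: spec_rel_cdiag.
have [U [ctrUU UctrU eU]] := observable_diagonalization e_obs.
have [s Us] : exists s : 'S_n.+2, forall i, U i (s i) != 0.
  by apply: det_neq0_perm_support; rewrite -unitfE -unitmxE (mulmx1_unit ctrUU).2.
have xE := cdiag_spec_perm ctrUU UctrU eU Us xe xx'.
have yE := cdiag_spec_perm ctrUU UctrU eU Us ye yy'.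
have Delta_spec z z' : in_Delta z -> z = z' \o s -> in_Delta z'.
  move=> Dz zE; rewrite (_ : z' = z \o (s^-1)%g); first exact: in_Delta_perm.
  by apply: funext => k; rewrite zE /= permKV.
rewrite xE yE; apply: bayes_perm => //; [exact: Delta_spec xE | exact: Delta_spec yE].
Qed.

End DiagonalEmbedding.

Lemma no_entropy_preserving_embedding (R : realType) n m
    (phi : 'M[complex R]_n.+2 -> ('I_m.+2 -> R)) :
  (forall rho, density rho -> in_Delta (phi rho)) ->
  (forall rho tau, density rho -> density tau ->
     spectral_le rho tau <-> bayes_le (phi rho) (phi tau)) ->
  (forall rho, density rho -> vN_entropy rho (shannon (phi rho))) -> False.
Proof.
move=> phi_Delta phi_order phi_entropy.
have phi_pure (t : 'I_m.+3) : exists k, phi (line_state R n t) = pure R k.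
  have rho_t := line_state_density R n t.
  apply: shannon_eq0_pure; first exact: phi_Delta.
  exact: vN_entropy_pure (line_state_pure R n t) (phi_entropy _ rho_t).
have [f f_pure] := fin_all_exists phi_pure.
have /injectivePn[a [b ab fab]] : ~~ injectiveb f.
  by apply/injectiveP => /leq_card; rewrite !card_ord ltnn.
move/negP: ab; apply; apply/eqP/val_inj/(@line_state_inj R n).
apply: spectral_le_pure_eq; try exact: line_state_pure.
apply/phi_order; try exact: line_state_density.
by rewrite !f_pure fab; apply: bayes_refl.
Qed.

Theorem mainTheorem1 (R : realType) (n : nat) (hn : (2 <= n)%N) :
  (* (i) *)
  (exists phi : ('I_n -> R) -> 'M[complex R]_n,
     (forall x, in_Delta x -> density (phi x)) /\
     (forall x y, in_Delta x -> in_Delta y ->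
        (bayes_le x y <-> spectral_le (phi x) (phi y))) /\
     (forall x, in_Delta x -> vN_entropy (phi x) (shannon x)))
  /\
  (* (ii) *)
  (forall m : nat, (2 <= m)%N ->
     ~ exists phi : 'M[complex R]_n -> ('I_m -> R),
       (forall rho, density rho -> in_Delta (phi rho)) /\
       (forall rho tau, density rho -> density tau ->
          (spectral_le rho tau <-> bayes_le (phi rho) (phi tau))) /\
       (forall rho, density rho -> vN_entropy rho (shannon (phi rho)))).
Proof.
case: n hn => [|[|n]] // _; split.
  exists (@cdiag R n.+2); split; first exact: cdiag_density.
  by split=> [x y | x _]; [exact: spectral_le_cdiag | exact: vN_entropy_cdiag].
move=> [|[|m]] // _ [phi [phi_Delta [phi_order phi_entropy]]].
exact: no_entropy_preserving_embedding phi_Delta phi_order phi_entropy.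
Qed.
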